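(* Fix $M>0$. For every $\delta>0$ there exist $\varepsilon_0>0$ and $l_0$ large such that the following holds for $0<\varepsilon\le\varepsilon_0$. Suppose a spherically symmetric solution of the Einstein–scalar field system exists in the open trapezoid region $T_0\subset\mathcal T$ and its initial data on the spacelike curve $\{r=2^{-l_0}\}$ satisfy $$\Big|\partial_vr+\frac Mr\Big|\le\varepsilon\frac Mr,\quad\Big|\partial_ur+\frac Mr\Big|\le\varepsilon\frac Mr,\quad\Big|\Omega^2-\frac{2M}r\Big|\le\varepsilon\frac Mr,\quad|\partial_u\phi|\le\frac{\varepsilon}{r^2},\quad|\partial_v\phi|\le\frac{\varepsilon}{r^2}.$$ Then throughout $T_0$: $$|r\partial_vr+M|\le\delta M,\qquad|r\partial_ur+M|\le\delta M,\qquad\Omega^2\le\frac{2.5M}{r},\qquad r^2|\partial_u\phi|+r^2|\partial_v\phi|\le C\varepsilon,$$ where $C$ depends only on $M$.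
   Context: The Einstein–scalar field system under spherical symmetry in double null coordinates, $g=-\Omega^2(u,v)\,du\,dv+r^2(u,v)(d\theta^2+\sin^2\theta\,d\varphi^2)$, with scalar field $\phi$, reads $r\partial_u\partial_v r=-\partial_ur\,\partial_vr-\frac14\Omega^2$, $r^2\partial_u\partial_v\log\Omega=\partial_ur\,\partial_vr+\frac14\Omega^2-r^2\partial_u\phi\,\partial_v\phi$, $r\partial_u\partial_v\phi=-\partial_ur\,\partial_v\phi-\partial_vr\,\partial_u\phi$, $\partial_u(\Omega^{-2}\partial_ur)=-r\Omega^{-2}(\partial_u\phi)^2$, $\partial_v(\Omega^{-2}\partial_vr)=-r\Omega^{-2}(\partial_v\phi)^2$. The trapped region is $\mathcal T=\{\partial_ur<0,\partial_vr<0,r>0\}$. The trapezoid region $T_0$ is the open region in $\mathcal T$ bounded to the past by the spacelike curve $\{r=2^{-l_0}\}$, to the future by the singular curve $\{r=0\}$, and on the sides by null segments $\{u=U\}$ and $\{v=V\}$ (so $T_0$ is the domain of dependence of its initial curve). These data are a perturbation of the Schwarzschild interior of mass parameter $M$ near $r=0$. *)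

From Stdlib Require Import Reals Lra.
Open Scope R_scope.

Definition pd_u (D : R -> R -> Prop) (f g : R -> R -> R) : Prop :=
  forall u v, D u v -> derivable_pt_lim (fun x => f x v) u (g u v).

Definition pd_v (D : R -> R -> Prop) (f g : R -> R -> R) : Prop :=
  forall u v, D u v -> derivable_pt_lim (fun y => f u y) v (g u v).

Definition cont2 (D : R -> R -> Prop) (f : R -> R -> R) : Prop :=
  forall u v, D u v -> forall e, 0 < e -> exists d, 0 < d /\
    forall u' v', D u' v' -> Rabs (u' - u) < d -> Rabs (v' - v) < d ->
      Rabs (f u' v' - f u v) < e.

Definition open2 (D : R -> R -> Prop) : Prop :=
  forall u v, D u v -> exists d, 0 < d /\
    forall u' v', Rabs (u' - u) < d -> Rabs (v' - v) < d -> D u' v'.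

(* Mixed derivatives d_u d_v f are taken as d_v (d_u f). *)
Definition ESF_solution (D : R -> R -> Prop)
  (r Om phi ru rv phiu phiv : R -> R -> R) : Prop :=
  (forall u v, D u v -> 0 < Om u v) /\
  pd_u D r ru /\ pd_v D r rv /\ pd_u D phi phiu /\ pd_v D phi phiv /\
  exists ruv Lu Luv phiuv : R -> R -> R,
    pd_v D ru ruv /\
    pd_u D (fun u v => ln (Om u v)) Lu /\ pd_v D Lu Luv /\
    pd_v D phiu phiuv /\
    pd_u D (fun u v => ru u v / (Om u v) ^ 2)
           (fun u v => - r u v / (Om u v) ^ 2 * (phiu u v) ^ 2) /\
    pd_v D (fun u v => rv u v / (Om u v) ^ 2)
           (fun u v => - r u v / (Om u v) ^ 2 * (phiv u v) ^ 2) /\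
    (forall u v, D u v ->
       r u v * ruv u v = - ru u v * rv u v - / 4 * (Om u v) ^ 2 /\
       (r u v) ^ 2 * Luv u v
         = ru u v * rv u v + / 4 * (Om u v) ^ 2
           - (r u v) ^ 2 * phiu u v * phiv u v /\
       r u v * phiuv u v = - ru u v * phiv u v - rv u v * phiu u v) /\
    cont2 D r /\ cont2 D Om /\ cont2 D phi /\
    cont2 D ru /\ cont2 D rv /\ cont2 D phiu /\ cont2 D phiv /\
    cont2 D ruv /\ cont2 D Luv /\ cont2 D phiuv.

(* The open trapezoid T0 in the (u,v)-plane, for an initial spacelike curve
   given as the graph v = gam u, u in (u1, U), with gam u1 = V: the points
   to the future of the curve, to the past of {u = U} and {v = V}, where the
   solution (domain D) exists. *)
Definition trapezoid (D : R -> R -> Prop) (u1 U V : R) (gam : R -> R)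
  (u v : R) : Prop :=
  u1 < u < U /\ gam u < v < V /\ D u v.

From Stdlib Require Import Reals Ranalysis5 Lra Psatz Classical.
Open Scope R_scope.

(* Everything is monotonicity along the two null directions.  Raychaudhuri's equations make
   [d r / Om^2] nonincreasing along null segments, so the initial ratio [d r / Om^2 ~ -1/2]
   propagates to [d r <= - 0.49 Om^2] throughout the trapezoid.  The wave equation for [r]
   reads [d_u (r d_v r) = d_v (r d_u r) = - Om^2 / 4]; hence along a [u]-segment both
   [r d_v r] and, as [d_u r <= - Om^2 / 4], also [r - r d_v r] are nonincreasing (and
   symmetrically in [v]).  This pins [r d r] to [- M] up to [eps M + r0], and with the
   Raychaudhuri bound gives [Om^2 r <= 2.5 M].  For the scalar field, the barrier
   [r |d phi| <= (2 eps / M) (- d r)] holds strictly on the initial curve, and at a first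
   point of equality the wave equation for [phi] makes the barrier quantity strictly
   decreasing, so it was already violated just before; a supremum argument over the
   trapezoid locates such a first point. *)

(** * Calculus of one variable *)

Lemma continuity_pt_eps f x : continuity_pt f x ->
  forall e, 0 < e -> exists d, 0 < d /\
    forall y, Rabs (y - x) < d -> Rabs (f y - f x) < e.
Proof.
  intros Hf e He. destruct (Hf e He) as [d [Hd Hfd]]. exists d; split; [exact Hd|].
  intros y Hy. destruct (Req_dec y x) as [-> | Hne].
  - rewrite Rminus_diag, Rabs_R0; exact He.
  - apply (Hfd y). split; [split; [exact I | auto] | exact Hy].
Qed.

Lemma MVT_dist f f' a b :
  (forall c, Rabs (c - a) <= Rabs (b - a) -> derivable_pt_lim f c (f' c)) ->
  exists c, Rabs (c - a) <= Rabs (b - a) /\ f b - f a = f' c * (b - a).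
Proof.
  intros Hd. destruct (Rtotal_order a b) as [Hab | [<- | Hab]].
  - destruct (MVT_cor2 f f' a b Hab) as [c [E Hc]].
    + intros c Hc. apply Hd. rewrite !Rabs_right; lra.
    + exists c. split; [rewrite !Rabs_right; lra | exact E].
  - exists a. split; [lra | ring].
  - destruct (MVT_cor2 f f' b a Hab) as [c [E Hc]].
    + intros c Hc. apply Hd. rewrite !Rabs_left1; lra.
    + exists c. split; [rewrite !Rabs_left1; lra | lra].
Qed.

Lemma nonincreasing_of_deriv_nonpos f f' a b : a <= b ->
  (forall c, a <= c <= b -> derivable_pt_lim f c (f' c)) ->
  (forall c, a < c < b -> f' c <= 0) -> f b <= f a.
Proof.
  intros [Hab | <-] Hd Hneg; [|lra].
  destruct (MVT_cor2 f f' a b Hab Hd) as [c [E Hc]].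
  specialize (Hneg c Hc). nra.
Qed.

Lemma deriv_neg_lt_before f x l : derivable_pt_lim f x l -> l < 0 ->
  exists d, 0 < d /\ forall h, 0 < h < d -> f x < f (x - h).
Proof.
  intros Hf Hl. destruct (Hf (- l / 2)) as [[d Hd] Hfd]; [lra|].
  exists d. split; [exact Hd|]. intros h Hh.
  assert (Hq : Rabs ((f (x + - h) - f x) / - h - l) < - l / 2).
  { apply Hfd; [lra | simpl; rewrite Rabs_left; lra]. }
  replace (x + - h) with (x - h) in Hq by ring.
  apply Rabs_def2 in Hq.
  assert (E : f (x - h) - f x = (f (x - h) - f x) / - h * - h) by (field; lra).
  nra.
Qed.

Lemma abs_escape_before p q p' q' x :
  derivable_pt_lim p x p' -> derivable_pt_lim q x q' -> Rabs p' + q' < 0 ->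
  Rabs (p x) + q x = 0 ->
  exists d, 0 < d /\ forall h, 0 < h < d -> 0 < Rabs (p (x - h)) + q (x - h).
Proof.
  intros Hp Hq Hneg Hx.
  (* [s p + q] minorizes [Rabs p + q] and agrees with it at [x]. *)
  set (s := if Rle_dec 0 (p x) then 1 else -1).
  assert (Hs_le : forall y, s * y <= Rabs y).
  { intro y. unfold s; destruct Rle_dec.
    - rewrite Rmult_1_l. apply Rle_abs.
    - replace (-1 * y) with (- y) by ring. rewrite <- Rabs_Ropp. apply Rle_abs. }
  assert (Hs_x : s * p x = Rabs (p x)).
  { unfold s; destruct Rle_dec.
    - rewrite Rabs_right; lra.
    - rewrite Rabs_left; lra. }
  destruct (deriv_neg_lt_before (fun y => s * p y + q y) x (s * p' + q')) as [d [Hd Hlt]].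
  - apply derivable_pt_lim_plus; [exact (derivable_pt_lim_scal p s x p' Hp) | exact Hq].
  - specialize (Hs_le p'). lra.
  - exists d. split; [exact Hd|]. intros h Hh.
    specialize (Hlt h Hh). specialize (Hs_le (p (x - h))). simpl in Hlt. lra.
Qed.

Lemma Rabs_le_inv x a : Rabs x <= a -> - a <= x <= a.
Proof.
  intros H. pose proof (Rle_abs x). pose proof (Rle_abs (- x)). rewrite Rabs_Ropp in *. lra.
Qed.

(** * Continuity in two variables and symmetry of mixed partials *)

Section RelativeContinuity.

Variable D : R -> R -> Prop.

Lemma cont2_near2 f g u v : cont2 D f -> cont2 D g -> D u v ->
  forall e, 0 < e -> exists d, 0 < d /\
    forall u' v', D u' v' -> Rabs (u' - u) < d -> Rabs (v' - v) < d ->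
      Rabs (f u' v' - f u v) < e /\ Rabs (g u' v' - g u v) < e.
Proof.
  intros Hf Hg Huv e He.
  destruct (Hf u v Huv e He) as [d1 [Hd1 H1]].
  destruct (Hg u v Huv e He) as [d2 [Hd2 H2]].
  exists (Rmin d1 d2). split; [now apply Rmin_pos|].
  intros u' v' HD Hu Hv.
  assert (Rmin d1 d2 <= d1) by apply Rmin_l. assert (Rmin d1 d2 <= d2) by apply Rmin_r.
  split; [apply H1 | apply H2]; auto; lra.
Qed.

Lemma cont2_lt_near f u v c : cont2 D f -> D u v -> c < f u v ->
  exists d, 0 < d /\ forall u' v', D u' v' ->
    Rabs (u' - u) < d -> Rabs (v' - v) < d -> c < f u' v'.
Proof.
  intros Hf Huv Hc. destruct (Hf u v Huv (f u v - c)) as [d [Hd Hfd]]; [lra|].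
  exists d. split; [exact Hd|]. intros u' v' HD Hu Hv.
  specialize (Hfd u' v' HD Hu Hv). apply Rabs_def2 in Hfd. lra.
Qed.

Lemma cont2_const c : cont2 D (fun _ _ => c).
Proof.
  intros u v _ e He. exists 1. split; [lra|].
  intros. rewrite Rminus_diag, Rabs_R0. exact He.
Qed.

Lemma cont2_plus f g : cont2 D f -> cont2 D g -> cont2 D (fun u v => f u v + g u v).
Proof.
  intros Hf Hg u v Huv e He.
  destruct (cont2_near2 f g u v Hf Hg Huv (e / 2)) as [d [Hd Hfg]]; [lra|].
  exists d. split; [exact Hd|]. intros u' v' HD Hu Hv.
  destruct (Hfg u' v' HD Hu Hv) as [H1 H2].
  apply Rabs_def2 in H1; apply Rabs_def2 in H2. apply Rabs_def1; lra.
Qed.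

Lemma cont2_mult f g : cont2 D f -> cont2 D g -> cont2 D (fun u v => f u v * g u v).
Proof.
  intros Hf Hg u v Huv e He.
  set (K := 1 + Rabs (f u v) + Rabs (g u v)).
  assert (HK : 1 <= K) by (unfold K; pose proof (Rabs_pos (f u v)); pose proof (Rabs_pos (g u v)); lra).
  set (e' := Rmin 1 (e / K)).
  assert (He' : 0 < e') by (apply Rmin_pos; [lra | apply Rdiv_lt_0_compat; lra]).
  assert (He'1 : e' <= 1) by apply Rmin_l.
  assert (He'K : e' * K <= e).
  { assert (e' <= e / K) by apply Rmin_r.
    apply (Rmult_le_compat_r K) in H; [|lra]. unfold Rdiv in H.
    rewrite Rmult_assoc, Rinv_l, Rmult_1_r in H; lra. }
  destruct (cont2_near2 f g u v Hf Hg Huv e' He') as [d [Hd Hfg]].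
  exists d. split; [exact Hd|]. intros u' v' HD Hu Hv.
  destruct (Hfg u' v' HD Hu Hv) as [H1 H2].
  set (x := f u' v' - f u v) in *. set (y := g u' v' - g u v) in *.
  replace (f u' v' * g u' v' - f u v * g u v)
    with (x * y + x * g u v + f u v * y) by (unfold x, y; ring).
  (* |x y + x g + f y| < e' (e' + |g| + |f|) <= e' K *)
  pose proof (Rabs_pos x). pose proof (Rabs_pos y).
  pose proof (Rabs_pos (f u v)). pose proof (Rabs_pos (g u v)).
  eapply Rle_lt_trans; [apply Rabs_triang|].
  eapply Rle_lt_trans; [apply Rplus_le_compat_r, Rabs_triang|].
  rewrite !Rabs_mult. unfold K in He'K. nra.
Qed.

Lemma cont2_abs f : cont2 D f -> cont2 D (fun u v => Rabs (f u v)).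
Proof.
  intros Hf u v Huv e He. destruct (Hf u v Huv e He) as [d [Hd Hfd]].
  exists d. split; [exact Hd|]. intros u' v' HD Hu Hv.
  eapply Rle_lt_trans; [apply Rabs_triang_inv2 | exact (Hfd u' v' HD Hu Hv)].
Qed.

Lemma cont2_le_from_below f a b : cont2 D f -> D a b ->
  (exists d, 0 < d /\ forall h, 0 < h < d -> D a (b - h) /\ f a (b - h) <= 0) ->
  f a b <= 0.
Proof.
  intros Hf Hab (d & Hd & Hbelow). apply Rnot_lt_le. intro Hpos.
  destruct (cont2_lt_near f a b 0 Hf Hab Hpos) as (d1 & Hd1 & Hnear).
  set (h := Rmin d d1 / 2).
  assert (Hh : 0 < h < d /\ h < d1).
  { unfold h. pose proof (Rmin_pos d d1 Hd Hd1). pose proof (Rmin_l d d1). pose proof (Rmin_r d d1). lra. }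
  destruct (Hbelow h ltac:(lra)) as [HD Hle].
  assert (0 < f a (b - h)); [|lra].
  apply Hnear; [exact HD | rewrite Rminus_diag, Rabs_R0; lra |].
  replace (b - h - b) with (- h) by ring. rewrite Rabs_Ropp, Rabs_right; lra.
Qed.

End RelativeContinuity.

Lemma second_difference_mvt f fu fuv u v h k :
  (forall s t, Rabs (s - u) <= Rabs h -> Rabs (t - v) <= Rabs k ->
     derivable_pt_lim (fun x => f x t) s (fu s t) /\
     derivable_pt_lim (fun y => fu s y) t (fuv s t)) ->
  exists s t, Rabs (s - u) <= Rabs h /\ Rabs (t - v) <= Rabs k /\
    f (u + h) (v + k) - f (u + h) v - (f u (v + k) - f u v) = h * k * fuv s t.
Proof.
  intros Hd.
  assert (Hk0 : Rabs (v - v) <= Rabs k) by (rewrite Rminus_diag, Rabs_R0; apply Rabs_pos).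
  assert (Hkk : Rabs (v + k - v) <= Rabs k) by (replace (v + k - v) with k by ring; lra).
  destruct (MVT_dist (fun x => f x (v + k) - f x v) (fun x => fu x (v + k) - fu x v) u (u + h))
    as [s [Hs Es]].
  { intros c Hc. replace (u + h - u) with h in Hc by ring.
    apply derivable_pt_lim_minus; apply (Hd c); auto. }
  replace (u + h - u) with h in Hs, Es by ring.
  destruct (MVT_dist (fu s) (fuv s) v (v + k)) as [t [Ht Et]].
  { intros c Hc. replace (v + k - v) with k in Hc by ring. apply (Hd s c); auto. }
  replace (v + k - v) with k in Ht, Et by ring.
  exists s, t. split; [exact Hs|]. split; [exact Ht|].
  simpl in Es. rewrite Et in Es. lra.
Qed.

Lemma mixed_increment D f fu fv fuv u v h d :
  (forall s t, Rabs (s - u) <= Rabs h -> Rabs (t - v) <= d -> D s t) -> 0 < d ->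
  pd_u D f fu -> pd_v D f fv -> pd_v D fu fuv ->
  forall eta, 0 < eta -> exists s t, Rabs (s - u) <= Rabs h /\ Rabs (t - v) <= d /\
    Rabs (fv (u + h) v - fv u v - h * fuv s t) < eta.
Proof.
  intros Hbox Hd Hu Hv Huv eta Heta.
  pose proof (Rabs_pos h).
  assert (HD0 : D u v) by (apply Hbox; rewrite Rminus_diag, Rabs_R0; lra).
  assert (HDh : D (u + h) v)
    by (apply Hbox; [replace (u + h - u) with h by ring | rewrite Rminus_diag, Rabs_R0]; lra).
  destruct (Hv (u + h) v HDh (eta / 2)) as [[k1 Hk1] Hq1]; [lra|].
  destruct (Hv u v HD0 (eta / 2)) as [[k2 Hk2] Hq2]; [lra|]. simpl in Hq1, Hq2.
  set (k := Rmin (Rmin k1 k2) d / 2).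
  assert (Hk : 0 < k /\ k < k1 /\ k < k2 /\ k < d).
  { unfold k. pose proof (Rmin_l (Rmin k1 k2) d). pose proof (Rmin_r (Rmin k1 k2) d).
    pose proof (Rmin_l k1 k2). pose proof (Rmin_r k1 k2).
    pose proof (Rmin_pos (Rmin k1 k2) d (Rmin_pos k1 k2 Hk1 Hk2) Hd). lra. }
  assert (Habs_k : Rabs k = k) by (apply Rabs_right; lra).
  assert (Q1 := Hq1 k ltac:(lra) ltac:(rewrite Habs_k; lra)).
  assert (Q2 := Hq2 k ltac:(lra) ltac:(rewrite Habs_k; lra)).
  destruct (second_difference_mvt f fu fuv u v h k) as (s & t & Hs & Ht & E).
  { intros s t Hs Ht. assert (HD : D s t) by (apply Hbox; lra).
    split; [apply Hu | apply Huv]; exact HD. }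
  exists s, t. split; [exact Hs|]. split; [lra|].
  assert (Ediff : (f (u + h) (v + k) - f (u + h) v) / k - (f u (v + k) - f u v) / k
                  = h * fuv s t) by (rewrite <- Rdiv_minus_distr, E; field; lra).
  apply Rabs_def2 in Q1. apply Rabs_def2 in Q2. apply Rabs_def1; lra.
Qed.

Lemma pd_u_of_mixed D f fu fv fuv : open2 D -> pd_u D f fu -> pd_v D f fv ->
  pd_v D fu fuv -> cont2 D fuv -> pd_u D fv fuv.
Proof.
  intros Hop Hu Hv Huv Hc u v HD e He.
  destruct (Hop u v HD) as (d0 & Hd0 & Hsq).
  destruct (Hc u v HD (e / 2)) as (d1 & Hd1 & Hc1); [lra|].
  set (d := Rmin d0 d1 / 2).
  assert (Hd : 0 < d /\ d < d0 /\ d < d1).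
  { unfold d. pose proof (Rmin_pos d0 d1 Hd0 Hd1). pose proof (Rmin_l d0 d1).
    pose proof (Rmin_r d0 d1). lra. }
  exists (mkposreal d (proj1 Hd)). simpl. intros h Hh0 Hh.
  assert (Habs_h : 0 < Rabs h) by (apply Rabs_pos_lt; exact Hh0).
  destruct (mixed_increment D f fu fv fuv u v h d) with (eta := e * Rabs h / 2)
    as (s & t & Hs & Ht & Hinc); [intros s t Hs Ht; apply Hsq; lra | lra | auto.. | nra |].
  assert (Hst : Rabs (fuv s t - fuv u v) < e / 2) by (apply Hc1; [apply Hsq|..]; lra).
  assert (HQ : Rabs ((fv (u + h) v - fv u v) / h - fuv s t) < e / 2).
  { apply (Rmult_lt_reg_r (Rabs h)); [exact Habs_h|]. rewrite <- Rabs_mult.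
    replace (((fv (u + h) v - fv u v) / h - fuv s t) * h)
      with (fv (u + h) v - fv u v - h * fuv s t) by (field; exact Hh0).
    lra. }
  replace ((fv (u + h) v - fv u v) / h - fuv u v)
    with (((fv (u + h) v - fv u v) / h - fuv s t) + (fuv s t - fuv u v)) by ring.
  eapply Rle_lt_trans; [apply Rabs_triang | lra].
Qed.

Lemma lub_exists_above (E : R -> Prop) m x : is_lub E m -> x < m ->
  exists w, E w /\ x < w.
Proof.
  intros [_ Hleast] Hx. apply NNPP; intro Hnone.
  assert (m <= x); [|lra].
  apply Hleast. intros w Hw. apply Rnot_lt_le. intro Hxw. apply Hnone. now exists w.
Qed.

Lemma cluster_first_coordinate (P : R -> R -> Prop) lo hi w :
  (forall h, 0 < h -> exists a b, P a b /\ lo <= a <= hi /\ w < b < w + h) ->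
  exists al, lo <= al <= hi /\
    forall h, 0 < h -> exists a b, P a b /\ Rabs (a - al) < h /\ w < b < w + h.
Proof.
  intros Hlo.
  set (Phi := fun x => forall h, 0 < h ->
    exists a b, P a b /\ x <= a <= hi /\ w < b < w + h).
  assert (Phi_hi : forall x, Phi x -> x <= hi).
  { intros x Hx. destruct (Hx 1 Rlt_0_1) as (a & b & _ & Ha & _). lra. }
  destruct (completeness Phi) as [al Hal].
  - exists hi. exact Phi_hi.
  - exists lo. exact Hlo.
  - exists al. split.
    + split; [apply (proj1 Hal); exact Hlo | apply (proj2 Hal); exact Phi_hi].
    + intros h Hh.
      destruct (lub_exists_above Phi al (al - h / 2) Hal ltac:(lra)) as [x [Hx Hxal]].
      assert (Hnot : ~ Phi (al + h / 2)).
      { intro Hp. pose proof (proj1 Hal _ Hp). lra. }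
      apply not_all_ex_not in Hnot. destruct Hnot as [h0 Hh0].
      apply imply_to_and in Hh0. destruct Hh0 as [Hh0 Hnone].
      destruct (Hx (Rmin h h0) (Rmin_pos h h0 Hh Hh0)) as (a & b & HP & Ha & Hb).
      pose proof (Rmin_l h h0). pose proof (Rmin_r h h0).
      exists a, b. split; [exact HP|]. split; [|lra].
      apply Rabs_def1; [|lra].
      apply Rnot_le_lt. intro Hfar. apply Hnone. exists a, b. split; [exact HP | repeat split; lra].
Qed.

(** * Estimates along null segments *)

Lemma raychaudhuri_bound kappa s0 s (r Om rX phiX : R -> R) : s0 <= s ->
  (forall c, s0 <= c <= s -> 0 < Om c) -> (forall c, s0 < c < s -> 0 < r c) ->
  (forall c, s0 <= c <= s ->
     derivable_pt_lim (fun x => rX x / Om x ^ 2) c (- r c / Om c ^ 2 * phiX c ^ 2)) ->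
  rX s0 <= - kappa * Om s0 ^ 2 -> rX s <= - kappa * Om s ^ 2.
Proof.
  intros Hs HOm Hr Hd H0.
  assert (Hmono : rX s / Om s ^ 2 <= rX s0 / Om s0 ^ 2).
  { apply (nonincreasing_of_deriv_nonpos _ _ s0 s Hs Hd). intros c Hc.
    pose proof (pow_lt (Om c) 2 (HOm c ltac:(lra))). pose proof (Hr c Hc).
    pose proof (pow2_ge_0 (phiX c)).
    assert (0 < r c / Om c ^ 2) by (apply Rdiv_lt_0_compat; lra).
    replace (- r c / Om c ^ 2 * phiX c ^ 2) with (- (r c / Om c ^ 2 * phiX c ^ 2))
      by (unfold Rdiv; ring). nra. }
  pose proof (HOm s0 ltac:(lra)). pose proof (HOm s ltac:(lra)).
  pose proof (pow_lt (Om s0) 2 ltac:(lra)). pose proof (pow_lt (Om s) 2 ltac:(lra)).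
  assert (E0 : rX s0 = rX s0 / Om s0 ^ 2 * Om s0 ^ 2) by (field; lra).
  assert (E : rX s = rX s / Om s ^ 2 * Om s ^ 2) by (field; lra).
  assert (rX s0 / Om s0 ^ 2 <= - kappa).
  { apply (Rmult_le_reg_r (Om s0 ^ 2)); [lra|]. rewrite <- E0. lra. }
  rewrite E. apply Rmult_le_compat_r; lra.
Qed.

Lemma nonincreasing_and_sub_nonincreasing (F w g dg : R -> R) s0 s : s0 <= s ->
  (forall c, s0 <= c <= s -> derivable_pt_lim F c (- w c) /\ derivable_pt_lim g c (dg c)) ->
  (forall c, s0 < c < s -> 0 <= w c /\ dg c + w c <= 0) ->
  F s <= F s0 /\ g s - F s <= g s0 - F s0.
Proof.
  intros Hs Hd Hsign. split.
  - apply (nonincreasing_of_deriv_nonpos F (fun c => - w c) s0 s Hs).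
    + intros c Hc. exact (proj1 (Hd c Hc)).
    + intros c Hc. pose proof (Hsign c Hc). lra.
  - apply (nonincreasing_of_deriv_nonpos (fun x => g x - F x) (fun c => dg c - - w c) s0 s Hs).
    + intros c Hc. destruct (Hd c Hc). now apply derivable_pt_lim_minus.
    + intros c Hc. pose proof (Hsign c Hc). lra.
Qed.

Lemma r_dr_of_data M eps r x : 0 < r -> Rabs (x + M / r) <= eps * (M / r) ->
  (1 - eps) * M <= - (r * x) <= (1 + eps) * M.
Proof.
  intros Hr Hx. apply Rabs_le_inv in Hx.
  assert (E : r * x = r * (x + M / r) - M) by (field; lra).
  assert (E' : r * (eps * (M / r)) = eps * M) by (field; lra).
  pose proof (Rmult_le_compat_l r _ _ ltac:(lra) (proj1 Hx)).
  pose proof (Rmult_le_compat_l r _ _ ltac:(lra) (proj2 Hx)).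
  rewrite Ropp_mult_distr_r_reverse in *. lra.
Qed.

Lemma dr_le_Om2_of_data M eps r x O : 0 < M -> 0 < r -> 0 <= eps <= 1 / 100 ->
  Rabs (x + M / r) <= eps * (M / r) -> Rabs (O ^ 2 - 2 * M / r) <= eps * (M / r) ->
  x <= - (49 / 100) * O ^ 2.
Proof.
  intros HM Hr Heps Hx HO. apply Rabs_le_inv in Hx. apply Rabs_le_inv in HO.
  assert (Hq : 0 < M / r) by (apply Rdiv_lt_0_compat; lra).
  replace (2 * M / r) with (2 * (M / r)) in HO by (field; lra).
  nra.
Qed.

Lemma flux_neg_of_data M eps r x p : 0 < M -> 0 < r -> 0 < eps <= 1 / 100 ->
  Rabs (x + M / r) <= eps * (M / r) -> Rabs p <= eps / r ^ 2 ->
  Rabs (r * p) + 2 * eps / M * x < 0.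
Proof.
  intros HM Hr Heps Hx Hp. apply Rabs_le_inv in Hx.
  assert (Hrp : Rabs (r * p) <= eps / r).
  { rewrite Rabs_mult, (Rabs_right r) by lra.
    replace (eps / r) with (r * (eps / r ^ 2)) by (field; lra).
    apply Rmult_le_compat_l; lra. }
  assert (Hq : 2 * eps / M * x <= 2 * eps / M * (- (1 - eps) * (M / r))).
  { apply Rmult_le_compat_l; [left; apply Rdiv_lt_0_compat|]; lra. }
  replace (2 * eps / M * (- (1 - eps) * (M / r))) with (- 2 * (1 - eps) * (eps / r)) in Hq
    by (field; lra).
  assert (0 < eps / r) by (apply Rdiv_lt_0_compat; lra).
  nra.
Qed.

Lemma flux_deriv_neg r rX rY pX pY rXY pXY O L :
  0 < r -> rX < 0 -> 0 < O -> 0 < L ->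
  r * rXY = - rX * rY - / 4 * O ^ 2 -> r * pXY = - rX * pY - rY * pX ->
  Rabs (r * pY) + L * rY <= 0 -> Rabs (rY * pX + r * pXY) + L * rXY < 0.
Proof.
  intros Hr HrX HO HL Er Ep Hflux.
  assert (Ediff : r * (rY * pX + r * pXY) = - rX * (r * pY)).
  { replace (r * (rY * pX + r * pXY)) with (r * rY * pX + r * (r * pXY)) by ring.
    rewrite Ep. ring. }
  assert (Habs : r * Rabs (rY * pX + r * pXY) = - rX * Rabs (r * pY)).
  { rewrite <- (Rabs_right r) at 1 by lra.
    rewrite <- Rabs_mult, Ediff, Rabs_mult, (Rabs_right (- rX)) by lra. reflexivity. }
  pose proof (pow_lt O 2 HO).
  assert (r * (Rabs (rY * pX + r * pXY) + L * rXY) < 0).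
  { rewrite Rmult_plus_distr_l, Habs, <- Rmult_assoc, (Rmult_comm r L), Rmult_assoc, Er. nra. }
  nra.
Qed.

(** * The trapezoid *)

Section Trapezoid.

Variables (D : R -> R -> Prop) (u1 U V : R) (gam : R -> R).
Hypothesis gam_decr : forall a b, u1 <= a -> a < b -> b <= U -> gam b < gam a.
Hypothesis gam_cont : forall a, u1 <= a <= U -> continuity_pt gam a.
Hypothesis gam_u1 : gam u1 = V.
Hypothesis D_curve : forall a, u1 < a < U -> D a (gam a).
Hypothesis past_closed : forall u v, trapezoid D u1 U V gam u v ->
  forall u' v', u1 < u' <= u -> gam u' < v' <= v -> D u' v'.

Local Notation T := (trapezoid D u1 U V gam).

Lemma trapezoid_D a b : T a b -> D a b.
Proof. intros (_ & _ & HD). exact HD. Qed.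

Lemma trapezoid_past a b a' b' : T a b -> u1 < a' <= a -> gam a' < b' <= b -> T a' b'.
Proof.
  intros HT Ha Hb. pose proof HT as (HaU & HbV & _).
  split; [lra | split; [lra | exact (past_closed a b HT a' b' Ha Hb)]].
Qed.

Lemma trapezoid_left a b : T a b ->
  exists d, 0 < d /\ forall h, 0 <= h < d -> T (a - h) b.
Proof.
  intros HT. pose proof HT as (HaU & HbV & _).
  destruct (continuity_pt_eps gam a (gam_cont a ltac:(lra)) (b - gam a)) as [d [Hd Hgd]]; [lra|].
  exists (Rmin d (a - u1)). split; [apply Rmin_pos; lra|].
  intros h Hh. pose proof (Rmin_l d (a - u1)). pose proof (Rmin_r d (a - u1)).
  assert (Hg : Rabs (gam (a - h) - gam a) < b - gam a).
  { apply Hgd. replace (a - h - a) with (- h) by ring. rewrite Rabs_Ropp, Rabs_right; lra. }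
  apply Rabs_def2 in Hg. apply (trapezoid_past a b); [exact HT | lra..].
Qed.

Lemma trapezoid_vertical a b y : T a b -> gam a <= y <= b -> D a y.
Proof.
  intros HT Hy. pose proof HT as (HaU & _ & _).
  destruct (Req_dec y (gam a)) as [-> | Hne]; [apply D_curve; lra|].
  apply trapezoid_D, (trapezoid_past a b); [exact HT | lra..].
Qed.

Lemma trapezoid_horizontal a b : T a b -> exists a0, u1 < a0 < a /\ gam a0 = b /\
  (forall c, a0 <= c <= a -> D c b) /\ (forall c, a0 < c <= a -> T c b).
Proof.
  intros HT. pose proof HT as (HaU & HbV & _).
  destruct (IVT_interv (fun x => b - gam x) u1 a) as [a0 [Ha0 E]].
  - intros c Hc. apply continuity_pt_minus; [apply continuity_pt_const; now intros ? ? | apply gam_cont; lra].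
  - lra.
  - rewrite gam_u1. lra.
  - lra.
  - assert (Ha0' : u1 < a0 < a) by (split; apply Rnot_le_lt; intros Hle;
      [assert (a0 = u1) by lra | assert (a0 = a) by lra]; subst; lra).
    assert (HTc : forall c, a0 < c <= a -> T c b).
    { intros c Hc. pose proof (gam_decr a0 c ltac:(lra) ltac:(lra) ltac:(lra)).
      apply (trapezoid_past a b); [exact HT | lra..]. }
    exists a0. split; [exact Ha0'|]. split; [lra|]. split; [|exact HTc].
    intros c Hc. destruct (Req_dec c a0) as [-> | Hne].
    + replace b with (gam a0) by lra. apply D_curve. lra.
    + apply trapezoid_D, HTc. lra.
Qed.

Section Barrier.

Variables GX GY : R -> R -> R.
Hypothesis GX_cont : cont2 D GX.
Hypothesis GY_cont : cont2 D GY.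
Hypothesis curve_neg : forall a, u1 < a < U -> GX a (gam a) < 0 /\ GY a (gam a) < 0.
Hypothesis GX_escape : forall a b, T a b -> GX a b = 0 -> GY a b <= 0 ->
  exists d, 0 < d /\ forall h, 0 < h < d -> 0 < GX a (b - h).
Hypothesis GY_escape : forall a b, T a b -> GY a b = 0 -> GX a b <= 0 ->
  exists d, 0 < d /\ forall h, 0 < h < d -> 0 < GY (a - h) b.

Local Notation ok a b := (GX a b <= 0 /\ GY a b <= 0).

Definition barrier_good us w := forall a b, T a b -> a <= us -> b <= w -> ok a b.

Lemma barrier_good_closed us w :
  (forall w', w' < w -> barrier_good us w') -> barrier_good us w.
Proof.
  intros Hbelow a b HT Ha Hb. destruct (Rlt_le_dec b w) as [Hlt | Hge].
  - apply (Hbelow b Hlt); [exact HT | exact Ha | lra].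
  - pose proof HT as (Hau & Hgb & _).
    assert (Hdown : forall h, 0 < h < b - gam a -> T a (b - h) /\ ok a (b - h)).
    { intros h Hh. assert (HTh : T a (b - h)) by (apply (trapezoid_past a b); [exact HT | lra..]).
      split; [exact HTh | apply (Hbelow (b - h)); [lra | exact HTh | exact Ha | lra]]. }
    split; apply (cont2_le_from_below D); try apply trapezoid_D; auto;
      exists (b - gam a); (split; [lra|]); intros h Hh;
      destruct (Hdown h Hh) as (HTh & HX & HY); (split; [apply trapezoid_D; exact HTh | assumption]).
Qed.

Lemma barrier_first_failure us vs : T us vs -> ~ ok us vs ->
  exists wb, barrier_good us wb /\ wb < vs /\ forall h, 0 < h ->
    exists a b, (T a b /\ ~ ok a b) /\ u1 <= a <= us /\ wb < b < wb + h.
Proof.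
  intros HT Hbad. pose proof HT as (HuU & HvV & _).
  assert (Hlt : forall w, barrier_good us w -> w < vs).
  { intros w Hw. apply Rnot_le_lt. intro Hle. apply Hbad, Hw; lra || exact HT. }
  assert (Hgam : barrier_good us (gam us)).
  { intros a b (HaU & Hb & _) Ha Hbw. exfalso. destruct Ha as [Ha | ->]; [|lra].
    pose proof (gam_decr a us ltac:(lra) Ha ltac:(lra)). lra. }
  destruct (completeness (barrier_good us)) as [wb Hwb].
  - exists vs. intros w Hw. left. exact (Hlt w Hw).
  - exists (gam us). exact Hgam.
  - assert (Hgood : barrier_good us wb).
    { apply barrier_good_closed. intros w' Hw'.
      destruct (lub_exists_above _ wb w' Hwb Hw') as (w & Hw & Hw'w).
      intros a b HTab Ha Hb. apply Hw; lra || assumption. }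
    exists wb. split; [exact Hgood|]. split; [exact (Hlt wb Hgood)|].
    intros h Hh. pose proof (Hlt wb Hgood) as Hwbvs.
    set (w := wb + Rmin h (vs - wb) / 2).
    assert (Hw : wb < w < wb + h).
    { unfold w. pose proof (Rmin_pos h (vs - wb) Hh ltac:(lra)). pose proof (Rmin_l h (vs - wb)). lra. }
    apply NNPP. intro Hnone.
    assert (Hgw : barrier_good us w).
    { intros a b HTab Ha Hb. apply NNPP. intro Hab.
      destruct (Rle_lt_dec b wb) as [Hbwb | Hbwb]; [exact (Hab (Hgood a b HTab Ha Hbwb))|].
      apply Hnone. exists a, b. pose proof HTab as (Hau & _ & _).
      split; [split; assumption | split; lra]. }
    pose proof (proj1 Hwb w Hgw). lra.
Qed.

Lemma barrier_good_strict_top us w a : barrier_good us w -> T a w -> a <= us ->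
  GX a w < 0 /\ GY a w < 0.
Proof.
  intros Hgood HT Ha. destruct (Hgood a w HT Ha (Rle_refl w)) as [HX HY].
  pose proof HT as (Hau & Hgw & _).
  destruct (Req_dec (GX a w) 0) as [HX0 | HXn].
  { destruct (GX_escape a w HT HX0 HY) as (d & Hd & Hesc).
    set (h := Rmin d (w - gam a) / 2).
    assert (Hh : 0 < h < d /\ h < w - gam a).
    { unfold h. pose proof (Rmin_pos d (w - gam a) Hd ltac:(lra)).
      pose proof (Rmin_l d (w - gam a)). pose proof (Rmin_r d (w - gam a)). lra. }
    assert (HTh : T a (w - h)) by (apply (trapezoid_past a w); [exact HT | lra..]).
    pose proof (Hesc h ltac:(lra)). pose proof (Hgood a (w - h) HTh Ha ltac:(lra)). lra. }
  destruct (Req_dec (GY a w) 0) as [HY0 | HYn].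
  { destruct (GY_escape a w HT HY0 HX) as (d & Hd & Hesc).
    destruct (trapezoid_left a w HT) as (d' & Hd' & Hleft).
    set (h := Rmin d d' / 2).
    assert (Hh : 0 < h < d /\ h < d').
    { unfold h. pose proof (Rmin_pos d d' Hd Hd'). pose proof (Rmin_l d d'). pose proof (Rmin_r d d'). lra. }
    pose proof (Hesc h ltac:(lra)). pose proof (Hgood (a - h) w (Hleft h ltac:(lra)) ltac:(lra) (Rle_refl w)).
    lra. }
  lra.
Qed.

Lemma barrier_ok_near a b : D a b -> GX a b < 0 -> GY a b < 0 ->
  exists d, 0 < d /\ forall a' b', D a' b' -> Rabs (a' - a) < d -> Rabs (b' - b) < d -> ok a' b'.
Proof.
  intros Hab HX HY.
  destruct (cont2_near2 D GX GY a b GX_cont GY_cont Hab (Rmin (- GX a b) (- GY a b))) as (d & Hd & Hnear).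
  { apply Rmin_pos; lra. }
  exists d. split; [exact Hd|]. intros a' b' HD Ha Hb.
  destruct (Hnear a' b' HD Ha Hb) as [H1 H2].
  pose proof (Rmin_l (- GX a b) (- GY a b)). pose proof (Rmin_r (- GX a b) (- GY a b)).
  apply Rabs_def2 in H1. apply Rabs_def2 in H2. lra.
Qed.

(* Were the barrier to fail, failures would cluster just above the supremum [wb] of the good
   levels; at the cluster point both functions are negative (on the curve by assumption,
   inside [T] since the escape hypotheses rule out a touching point), contradicting continuity. *)
Theorem barrier_principle a b : T a b -> ok a b.
Proof.
  intros HT. apply NNPP. intro Hbad. pose proof HT as (HaU & HbV & _).
  destruct (barrier_first_failure a b HT Hbad) as (wb & Hgood & Hwb & Hfail).
  destruct (cluster_first_coordinate (fun a' b' => T a' b' /\ ~ ok a' b') u1 a wb Hfail)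
    as (al & Hal & Hcl).
  assert (Hfar : forall d, 0 < d -> ~ (forall a' b', D a' b' ->
      Rabs (a' - al) < d -> Rabs (b' - wb) < d -> ok a' b')).
  { intros d Hd Hok. destruct (Hcl d Hd) as (a' & b' & (HT' & Hbad') & Ha' & Hb').
    apply Hbad', Hok; [exact (trapezoid_D a' b' HT') | exact Ha' | apply Rabs_def1; lra]. }
  assert (Hal_u1 : gam al <= wb -> u1 < al).
  { intros Hle. destruct (proj1 Hal) as [Hlt | <-]; [exact Hlt | rewrite gam_u1 in Hle; lra]. }
  destruct (Rtotal_order (gam al) wb) as [Hin | [Hon | Habove]].
  - assert (HTal : T al wb) by (apply (trapezoid_past a b); [exact HT | lra..]).
    destruct (barrier_good_strict_top a wb al Hgood HTal (proj2 Hal)) as [HX HY].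
    destruct (barrier_ok_near al wb (trapezoid_D al wb HTal) HX HY) as (d & Hd & Hok).
    exact (Hfar d Hd Hok).
  - pose proof (Hal_u1 (Req_le _ _ Hon)). rewrite <- Hon in Hfar.
    destruct (curve_neg al ltac:(lra)) as [HX HY].
    destruct (barrier_ok_near al (gam al) (D_curve al ltac:(lra)) HX HY) as (d & Hd & Hok).
    exact (Hfar d Hd Hok).
  - destruct (continuity_pt_eps gam al (gam_cont al ltac:(lra)) ((gam al - wb) / 2))
      as (d & Hd & Hgd); [lra|].
    set (h := Rmin d ((gam al - wb) / 2)).
    assert (Hh : 0 < h /\ h <= d /\ h <= (gam al - wb) / 2).
    { unfold h. split; [apply Rmin_pos; lra | split; [apply Rmin_l | apply Rmin_r]]. }
    destruct (Hcl h ltac:(lra)) as (a' & b' & ((_ & Hgb & _) & _) & Ha' & Hb').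
    pose proof (Hgd a' ltac:(lra)) as Hg. apply Rabs_def2 in Hg. lra.
Qed.

End Barrier.

Section Solution.

Variables (M eps r0 : R) (r Om ru rv phiu phiv ruv phiuv : R -> R -> R).
Hypothesis M_pos : 0 < M.
Hypothesis eps_small : 0 < eps <= 1 / 100.
Hypothesis r0_pos : 0 < r0.
Hypothesis r0_small : r0 <= M / 8.
Hypothesis Om_pos : forall u v, D u v -> 0 < Om u v.
Hypothesis r_u : pd_u D r ru.
Hypothesis r_v : pd_v D r rv.
Hypothesis ru_v : pd_v D ru ruv.
Hypothesis rv_u : pd_u D rv ruv.
Hypothesis phiu_v : pd_v D phiu phiuv.
Hypothesis phiv_u : pd_u D phiv phiuv.
Hypothesis raychaudhuri_u : pd_u D (fun u v => ru u v / (Om u v) ^ 2)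
  (fun u v => - r u v / (Om u v) ^ 2 * (phiu u v) ^ 2).
Hypothesis raychaudhuri_v : pd_v D (fun u v => rv u v / (Om u v) ^ 2)
  (fun u v => - r u v / (Om u v) ^ 2 * (phiv u v) ^ 2).
Hypothesis wave_r : forall u v, D u v ->
  r u v * ruv u v = - ru u v * rv u v - / 4 * (Om u v) ^ 2.
Hypothesis wave_phi : forall u v, D u v ->
  r u v * phiuv u v = - ru u v * phiv u v - rv u v * phiu u v.
Hypothesis r_cont : cont2 D r.
Hypothesis ru_cont : cont2 D ru.
Hypothesis rv_cont : cont2 D rv.
Hypothesis phiu_cont : cont2 D phiu.
Hypothesis phiv_cont : cont2 D phiv.
Hypothesis trapped : forall u v, T u v -> ru u v < 0 /\ rv u v < 0 /\ 0 < r u v.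
Hypothesis initial_data : forall a, u1 < a < U ->
  let v := gam a in
  r a v = r0 /\
  Rabs (rv a v + M / r a v) <= eps * (M / r a v) /\
  Rabs (ru a v + M / r a v) <= eps * (M / r a v) /\
  Rabs ((Om a v) ^ 2 - 2 * M / r a v) <= eps * (M / r a v) /\
  Rabs (phiu a v) <= eps / (r a v) ^ 2 /\
  Rabs (phiv a v) <= eps / (r a v) ^ 2.

(* [flux_u <= 0] and [flux_v <= 0] encode [r |d phi| <= (2 eps / M) (- d r)]. *)
Let flux_u a b := Rabs (r a b * phiu a b) + 2 * eps / M * ru a b.
Let flux_v a b := Rabs (r a b * phiv a b) + 2 * eps / M * rv a b.

Lemma curve_estimates a : u1 < a < U ->
  r a (gam a) = r0 /\
  (1 - eps) * M <= - (r0 * rv a (gam a)) <= (1 + eps) * M /\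
  (1 - eps) * M <= - (r0 * ru a (gam a)) <= (1 + eps) * M /\
  ru a (gam a) <= - (49 / 100) * Om a (gam a) ^ 2 /\
  rv a (gam a) <= - (49 / 100) * Om a (gam a) ^ 2 /\
  flux_u a (gam a) < 0 /\ flux_v a (gam a) < 0.
Proof.
  intros Ha. destruct (initial_data a Ha) as (Er & Hrv & Hru & HOm & Hpu & Hpv).
  cbv zeta in *. rewrite Er in *. unfold flux_u, flux_v. rewrite Er.
  split; [reflexivity|].
  split; [exact (r_dr_of_data M eps r0 _ r0_pos Hrv)|].
  split; [exact (r_dr_of_data M eps r0 _ r0_pos Hru)|].
  split; [apply (dr_le_Om2_of_data M eps r0 _ _ M_pos r0_pos ltac:(lra) Hru HOm)|].
  split; [apply (dr_le_Om2_of_data M eps r0 _ _ M_pos r0_pos ltac:(lra) Hrv HOm)|].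
  split; [exact (flux_neg_of_data M eps r0 _ _ M_pos r0_pos eps_small Hru Hpu)
         | exact (flux_neg_of_data M eps r0 _ _ M_pos r0_pos eps_small Hrv Hpv)].
Qed.

Lemma ru_le_Om2 a b : T a b -> ru a b <= - (49 / 100) * Om a b ^ 2.
Proof.
  intros HT. destruct (trapezoid_horizontal a b HT) as (a0 & Ha0 & Hb & HD & HTc).
  pose proof HT as (HaU & _ & _).
  apply (raychaudhuri_bound _ a0 a (fun x => r x b) (fun x => Om x b) (fun x => ru x b)
           (fun x => phiu x b)); [lra | | | |].
  - intros c Hc. exact (Om_pos c b (HD c Hc)).
  - intros c Hc. apply (trapped c b), HTc. lra.
  - intros c Hc. exact (raychaudhuri_u c b (HD c Hc)).
  - subst b. apply (curve_estimates a0). lra.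
Qed.

Lemma rv_le_Om2 a b : T a b -> rv a b <= - (49 / 100) * Om a b ^ 2.
Proof.
  intros HT. pose proof HT as (HaU & Hb & _).
  apply (raychaudhuri_bound _ (gam a) b (r a) (Om a) (rv a) (phiv a)); [lra | | | |].
  - intros c Hc. exact (Om_pos a c (trapezoid_vertical a b c HT Hc)).
  - intros c Hc. apply (trapped a c), (trapezoid_past a b); [exact HT | lra..].
  - intros c Hc. exact (raychaudhuri_v a c (trapezoid_vertical a b c HT Hc)).
  - apply curve_estimates. lra.
Qed.

(* Along a null segment the Raychaudhuri bound [- d r >= Om^2 / 4] makes both
   [r d' r] and [r - r d' r] monotone, since [d (r d' r) = - Om^2 / 4]. *)
Lemma r_rv_bounds a b : T a b ->
  (1 - eps) * M <= - (r a b * rv a b) <= (1 + eps) * M + r0.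
Proof.
  intros HT. destruct (trapezoid_horizontal a b HT) as (a0 & Ha0 & Hb & HD & HTc).
  pose proof HT as (HaU & _ & _). destruct (trapped a b HT) as (_ & _ & Hr).
  destruct (nonincreasing_and_sub_nonincreasing (fun x => r x b * rv x b)
    (fun x => Om x b ^ 2 / 4) (fun x => r x b) (fun x => ru x b) a0 a) as [Hlo Hup]; [lra | | |].
  - intros c Hc. pose proof (HD c Hc) as HDc. split; [|exact (r_u c b HDc)]. cbv beta.
    replace (- (Om c b ^ 2 / 4)) with (ru c b * rv c b + r c b * ruv c b)
      by (rewrite (wave_r c b HDc); lra).
    exact (derivable_pt_lim_mult (fun x => r x b) (fun x => rv x b) c _ _
             (r_u c b HDc) (rv_u c b HDc)).
  - intros c Hc. pose proof (ru_le_Om2 c b (HTc c ltac:(lra))). pose proof (pow2_ge_0 (Om c b)).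
    lra.
  - subst b. destruct (curve_estimates a0 ltac:(lra)) as (Er & Hrv & _). cbv beta in Hlo, Hup.
    rewrite Er in Hlo, Hup. lra.
Qed.

Lemma r_ru_bounds a b : T a b ->
  (1 - eps) * M <= - (r a b * ru a b) <= (1 + eps) * M + r0.
Proof.
  intros HT. pose proof HT as (HaU & Hb & _). destruct (trapped a b HT) as (_ & _ & Hr).
  destruct (nonincreasing_and_sub_nonincreasing (fun y => r a y * ru a y)
    (fun y => Om a y ^ 2 / 4) (r a) (rv a) (gam a) b) as [Hlo Hup]; [lra | | |].
  - intros c Hc. pose proof (trapezoid_vertical a b c HT Hc) as HDc. split; [|exact (r_v a c HDc)]. cbv beta.
    replace (- (Om a c ^ 2 / 4)) with (rv a c * ru a c + r a c * ruv a c)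
      by (rewrite (wave_r a c HDc); lra).
    exact (derivable_pt_lim_mult (r a) (ru a) c _ _ (r_v a c HDc) (ru_v a c HDc)).
  - intros c Hc. pose proof (rv_le_Om2 a c ltac:(apply (trapezoid_past a b); [exact HT | lra..])).
    pose proof (pow2_ge_0 (Om a c)). lra.
  - destruct (curve_estimates a ltac:(lra)) as (Er & _ & Hru & _). cbv beta in Hlo, Hup.
    rewrite Er in Hlo, Hup. lra.
Qed.

Lemma flux_u_escape a b : T a b -> flux_u a b = 0 -> flux_v a b <= 0 ->
  exists d, 0 < d /\ forall h, 0 < h < d -> 0 < flux_u a (b - h).
Proof.
  intros HT H0 HY. pose proof (trapezoid_D a b HT) as HD.
  destruct (trapped a b HT) as (Hru & Hrv & Hr).
  apply (abs_escape_before (fun y => r a y * phiu a y) (fun y => 2 * eps / M * ru a y)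
           (rv a b * phiu a b + r a b * phiuv a b) (2 * eps / M * ruv a b) b).
  - exact (derivable_pt_lim_mult (r a) (phiu a) b _ _ (r_v a b HD) (phiu_v a b HD)).
  - exact (derivable_pt_lim_scal (ru a) (2 * eps / M) b _ (ru_v a b HD)).
  - apply (flux_deriv_neg _ (ru a b) _ _ (phiv a b) _ _ (Om a b)); auto.
    apply Rdiv_lt_0_compat; lra.
  - exact H0.
Qed.

Lemma flux_v_escape a b : T a b -> flux_v a b = 0 -> flux_u a b <= 0 ->
  exists d, 0 < d /\ forall h, 0 < h < d -> 0 < flux_v (a - h) b.
Proof.
  intros HT H0 HX. pose proof (trapezoid_D a b HT) as HD.
  destruct (trapped a b HT) as (Hru & Hrv & Hr).
  apply (abs_escape_before (fun x => r x b * phiv x b) (fun x => 2 * eps / M * rv x b)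
           (ru a b * phiv a b + r a b * phiuv a b) (2 * eps / M * ruv a b) a).
  - exact (derivable_pt_lim_mult (fun x => r x b) (fun x => phiv x b) a _ _
             (r_u a b HD) (phiv_u a b HD)).
  - exact (derivable_pt_lim_scal (fun x => rv x b) (2 * eps / M) a _ (rv_u a b HD)).
  - apply (flux_deriv_neg _ (rv a b) _ _ (phiu a b) _ _ (Om a b)); auto.
    + apply Rdiv_lt_0_compat; lra.
    + rewrite (wave_r a b HD). ring.
    + rewrite (wave_phi a b HD). ring.
  - exact H0.
Qed.

Lemma flux_nonpos a b : T a b -> flux_u a b <= 0 /\ flux_v a b <= 0.
Proof.
  apply (barrier_principle flux_u flux_v).
  - unfold flux_u. apply cont2_plus; [apply cont2_abs, cont2_mult; assumption |].
    apply cont2_mult; [apply cont2_const | exact ru_cont].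
  - unfold flux_v. apply cont2_plus; [apply cont2_abs, cont2_mult; assumption |].
    apply cont2_mult; [apply cont2_const | exact rv_cont].
  - intros c Hc. destruct (curve_estimates c Hc) as (_ & _ & _ & _ & _ & Hu & Hv). auto.
  - exact flux_u_escape.
  - exact flux_v_escape.
Qed.

Lemma trapped_region_bounds a b : T a b ->
  Rabs (r a b * rv a b + M) <= eps * M + r0 /\
  Rabs (r a b * ru a b + M) <= eps * M + r0 /\
  (Om a b) ^ 2 <= 5 / 2 * M / r a b /\
  (r a b) ^ 2 * Rabs (phiu a b) + (r a b) ^ 2 * Rabs (phiv a b) <= 5 * eps.
Proof.
  intros HT. destruct (trapped a b HT) as (Hru & Hrv & Hr).
  pose proof (r_rv_bounds a b HT) as Hrrv. pose proof (r_ru_bounds a b HT) as Hrru.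
  split; [apply Rabs_le; lra|]. split; [apply Rabs_le; lra|]. split.
  - pose proof (ru_le_Om2 a b HT).
    apply (Rmult_le_reg_r (r a b)); [exact Hr|].
    replace (5 / 2 * M / r a b * r a b) with (5 / 2 * M) by (field; lra). nra.
  - destruct (flux_nonpos a b HT) as [Hu Hv]. unfold flux_u, flux_v in Hu, Hv.
    rewrite Rabs_mult, (Rabs_right (r a b)) in Hu, Hv by lra.
    (* r^2 |d phi| <= (2 eps / M) (- r d r) <= (2 eps / M) (1.01 M + M / 8) *)
    assert (HL : 0 < 2 * eps / M) by (apply Rdiv_lt_0_compat; lra).
    assert (E : 2 * eps / M * M = 2 * eps) by (field; lra).
    nra.
Qed.

End Solution.

End Trapezoid.
Theorem mainTheorem13 :
  forall M : R, 0 < M ->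
  exists C : R, 0 < C /\
  forall delta : R, 0 < delta ->
  exists eps0 : R, 0 < eps0 /\
  exists l0 : nat,
  forall eps : R, 0 < eps <= eps0 ->
  forall (u1 U V : R) (gam : R -> R) (D : R -> R -> Prop)
         (r Om phi ru rv phiu phiv : R -> R -> R),
    u1 < U ->
    (* the initial curve v = gam u is spacelike (strictly decreasing),
       continuous, and meets {v = V} at u = u1 *)
    (forall a b, u1 <= a -> a < b -> b <= U -> gam b < gam a) ->
    (forall a, u1 <= a <= U -> continuity_pt gam a) ->
    gam u1 = V ->
    open2 D ->
    (forall a, u1 < a < U -> D a (gam a)) ->
    ESF_solution D r Om phi ru rv phiu phiv ->
    (* T0 is the domain of dependence of the initial curve: past-closed *)
    (forall u v, trapezoid D u1 U V gam u v ->
       forall u' v', u1 < u' <= u -> gam u' < v' <= v -> D u' v') ->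
    (forall u v, trapezoid D u1 U V gam u v ->
       ru u v < 0 /\ rv u v < 0 /\ 0 < r u v) ->
    (* initial data on the curve {r = 2^-l0} *)
    (forall a, u1 < a < U ->
       let v := gam a in
       r a v = (/ 2) ^ l0 /\
       Rabs (rv a v + M / r a v) <= eps * (M / r a v) /\
       Rabs (ru a v + M / r a v) <= eps * (M / r a v) /\
       Rabs ((Om a v) ^ 2 - 2 * M / r a v) <= eps * (M / r a v) /\
       Rabs (phiu a v) <= eps / (r a v) ^ 2 /\
       Rabs (phiv a v) <= eps / (r a v) ^ 2) ->
    forall u v, trapezoid D u1 U V gam u v ->
      Rabs (r u v * rv u v + M) <= delta * M /\
      Rabs (r u v * ru u v + M) <= delta * M /\
      (Om u v) ^ 2 <= 5 / 2 * M / r u v /\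
      (r u v) ^ 2 * Rabs (phiu u v) + (r u v) ^ 2 * Rabs (phiv u v) <= C * eps.
Proof.
  intros M HM. exists 5. split; [lra|]. intros delta Hdelta.
  exists (Rmin (delta / 2) (1 / 100)). split; [apply Rmin_pos; lra|].
  destruct (pow_lt_1_zero (/ 2) ltac:(rewrite Rabs_right; lra) (Rmin (delta * M / 2) (M / 8)))
    as [l0 Hl0]; [apply Rmin_pos; nra|].
  exists l0. intros eps Heps u1 U V gam D r Om phi ru rv phiu phiv
    _ gam_decr gam_cont gam_u1 Hopen D_curve Hsol past_closed trapped initial_data u v HT.
  assert (Hr0 : 0 < (/ 2) ^ l0 < Rmin (delta * M / 2) (M / 8)).
  { pose proof (pow_lt (/ 2) l0 ltac:(lra)). specialize (Hl0 l0 (le_n l0)).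
    rewrite Rabs_right in Hl0; lra. }
  pose proof (Rmin_l (delta * M / 2) (M / 8)). pose proof (Rmin_r (delta * M / 2) (M / 8)).
  pose proof (Rmin_l (delta / 2) (1 / 100)). pose proof (Rmin_r (delta / 2) (1 / 100)).
  destruct Hsol as (Om_pos & r_u & r_v & phi_u & phi_v & ruv & Lu & Luv & phiuv & ru_v & _ & _ &
    phiu_v & ray_u & ray_v & waves & r_cont & _ & _ & ru_cont & rv_cont & phiu_cont &
    phiv_cont & ruv_cont & _ & phiuv_cont).
  destruct (trapped_region_bounds D u1 U V gam gam_decr gam_cont gam_u1 D_curve past_closed
    M eps ((/ 2) ^ l0) r Om ru rv phiu phiv ruv phiuv HM ltac:(lra) ltac:(lra) ltac:(lra)
    Om_pos r_u r_v ru_v (pd_u_of_mixed D r ru rv ruv Hopen r_u r_v ru_v ruv_cont)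
    phiu_v (pd_u_of_mixed D phi phiu phiv phiuv Hopen phi_u phi_v phiu_v phiuv_cont)
    ray_u ray_v (fun u v H => proj1 (waves u v H)) (fun u v H => proj2 (proj2 (waves u v H)))
    r_cont ru_cont rv_cont phiu_cont phiv_cont trapped initial_data u v HT)
    as (Hrv & Hru & HOm & Hphi).
  assert (eps * M <= delta / 2 * M) by (apply Rmult_le_compat_r; lra).
  split; [lra | split; [lra | split; [exact HOm | exact Hphi]]].
Qed.
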